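(* Fix integers $d\ge 1$, $N\ge 1$, $k\ge 1$, $a\in\{1,\dots,N\}$, $b\ge 2$ with $2^{b-1}>N$, a constant $m>0$, and power-law constants $\phi>0$, $\alpha<0$. Let $\mathbf{U}\in\mathbb{R}^d$ be a model-update vector whose entries, ranked in descending order of absolute value as $U\{1\},\dots,U\{d\}$, satisfy the power-law model $|U\{l\}|=\phi\, l^{\alpha}$ for $l=1,\dots,d$ (the paper's power-law assumption, used with equality in the bound), and let $f=\frac{2^{b-1}-N}{Nm}$. Define $$p_l=\frac{l^{\alpha}}{\sum_{l'=1}^d (l')^{\alpha}},\qquad q_l=1-(1-p_l)^k,\qquad r_l=\sum_{j=a}^{N}\binom{N}{j}q_l^{\,j}(1-q_l)^{N-j}.$$ Let $\Pi(\Theta(f\mathbf{U}))$ be the compressed vector obtained by: (i) quantizing each entry $fU_l$ of $f\mathbf{U}$ by the stochastic rounding $\theta$ below; (ii) multiplying the result by $v_l\in\{0,1\}$, where the coordinate holding the $l$-th largest entry $U\{l\}$ has $v_l=1$ with probability $r_l$ (the probability that at least $a$ of the $N$ clients voted for it, each client independently voting for it with probability $q_l$), the selection being independent of the rounding randomness. Then $$\mathbb{E}\big\|\Pi(\Theta(f\mathbf{U}))-f\mathbf{U}\big\|^2\le \gamma\,\|f\mathbf{U}\|^2,\qquad \gamma=1-\frac{\sum_{l=1}^d r_l\, l^{2\alpha}}{\sum_{l=1}^d l^{2\alpha}}+\frac{1}{4f^2}\,\frac{\sum_{l=1}^d r_l}{\phi^2\sum_{l=1}^d l^{2\alpha}}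.$$
   Context: Setting (FediAC in-network federated learning): $N$ clients each hold a model-update vector in $\mathbb{R}^d$. In the voting phase each client votes for $k$ coordinates by $k$ independent draws, the $l$-th largest (in absolute value) coordinate being drawn with probability $p_l$; a coordinate therefore receives that client's vote with probability $q_l$. A programmable switch sums the 0-1 vote arrays and keeps a coordinate (global index array entry $v_l=1$) iff it received at least $a$ votes, otherwise $v_l=0$. Stochastic integer rounding: for a real $x$, $\theta(x)=\lfloor x\rfloor$ with probability $\lceil x\rceil-x$ and $\theta(x)=\lceil x\rceil$ with probability $x-\lfloor x\rfloor$ (so $\mathbb{E}\theta(x)=x$); $\Theta$ applies $\theta$ entrywise. Sparsification $\Pi$ multiplies each entry by $v_l$. Here $m$ denotes the maximum absolute value of model updates and $f$ is the scaling factor applied before quantization to $b$-bit integers. *)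

From mathcomp Require Import all_boot all_order all_algebra all_fingroup.
From mathcomp Require Import all_classical all_reals all_analysis.
Set Implicit Arguments. Unset Strict Implicit. Unset Printing Implicit Defensive.
Import Order.TTheory GRing.Theory Num.Theory.
Local Open Scope ring_scope.

Section FediAC.
Variable R : realType.

(* p_l, q_l, r_l for the rank l+1 (ranks are 1-based in the paper,
   indices i : 'I_d are 0-based, rank of i is i+1). *)
Definition pl (d : nat) (alpha : R) (l : nat) : R :=
  (l.+1%:R `^ alpha) / (\sum_(l' < d) (l'.+1%:R `^ alpha)).

Definition ql (d k : nat) (alpha : R) (l : nat) : R :=
  1 - (1 - pl d alpha l) ^+ k.

Definition rl (d k N a : nat) (alpha : R) (l : nat) : R :=
  \sum_(a <= j < N.+1) ('C(N, j))%:R * ql d k alpha l ^+ j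
                        * (1 - ql d k alpha l) ^+ (N - j).

(* Stochastic rounding theta(x): ceil x with probability x - floor x,
   floor x with the complementary probability (= ceil x - x when x is
   not an integer; when x is an integer both values equal x). *)
Definition round_up_prob (x : R) : R := x - (Num.floor x)%:~R.

Definition theta_val (up : bool) (x : R) : R :=
  if up then (Num.ceil x)%:~R else (Num.floor x)%:~R.

Definition bern (pr : R) (b : bool) : R := if b then pr else 1 - pr.

(* Squared error || Pi(Theta(x)) - x ||^2 for outcome (v, c):
   v = selection (global index array), c = rounding directions. *)
Definition sq_err (d : nat) (x : 'I_d -> R)
    (v c : {ffun 'I_d -> bool}) : R :=
  \sum_(i < d) ((v i)%:R * theta_val (c i) (x i) - x i) ^+ 2.

Definition outcome_prob (d : nat) (sel x : 'I_d -> R)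
    (v c : {ffun 'I_d -> bool}) : R :=
  \prod_(i < d) (bern (sel i) (v i) * bern (round_up_prob (x i)) (c i)).

Definition expected_sq_err (d : nat) (sel x : 'I_d -> R) : R :=
  \sum_(v : {ffun 'I_d -> bool}) \sum_(c : {ffun 'I_d -> bool})
     outcome_prob sel x v c * sq_err x v c.

Definition sqnorm (d : nat) (x : 'I_d -> R) : R := \sum_(i < d) x i ^+ 2.

End FediAC.

From mathcomp Require Import all_boot all_order all_algebra all_fingroup.
From mathcomp Require Import all_classical all_reals all_analysis.
From mathcomp Require Import ring lra.
Import Order.TTheory GRing.Theory Num.Theory.
Local Open Scope ring_scope.

Set Implicit Arguments.
Unset Strict Implicit.

(* The outcome (selection, rounding directions) is a product of independent
   per-coordinate choices and the squared error is a sum over coordinates, so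
   the expected error is the sum of the per-coordinate expected errors.  A
   coordinate x kept with probability s costs s times the stochastic-rounding
   variance, which is at most 1/4, plus (1 - s) x^2 when it is dropped.  Under
   the power law, x_(sigma l)^2 = (f phi)^2 l^(2 alpha) and s_(sigma l) = r_l,
   and the resulting bound sum_i ((1 - s_i) x_i^2 + s_i / 4) equals
   gamma ||f U||^2 exactly. *)

Lemma expect_separable_prod (R : comPzSemiRingType) (I T1 T2 : finType)
    (w e : I -> T1 -> T2 -> R) :
  (forall i, \sum_(t1 : T1) \sum_(t2 : T2) w i t1 t2 = 1) ->
  \sum_(v : {ffun I -> T1}) \sum_(c : {ffun I -> T2})
     (\prod_i w i (v i) (c i)) * (\sum_j e j (v j) (c j))
  = \sum_j \sum_(t1 : T1) \sum_(t2 : T2) w j t1 t2 * e j t1 t2.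
Proof.
move=> w1.
under eq_bigr => v _ do under eq_bigr => c _ do rewrite mulr_sumr.
under eq_bigr => v _ do rewrite exchange_big.
rewrite exchange_big; apply: eq_bigr => j _.
(* Absorbing [e j] into the [j]-th factor makes the summand a product, so the
   sums over all functions factor coordinatewise (bigA_distr_bigA). *)
pose F i t1 t2 := w i t1 t2 * (if i == j then e j t1 t2 else 1).
have prodF v c : (\prod_i w i (v i) (c i)) * e j (v j) (c j)
                 = \prod_i F i (v i) (c i).
  rewrite /F big_split /=; congr (_ * _).
  by rewrite (bigD1 j) //= eqxx big1 ?mulr1 // => i /negbTE ->.
under eq_bigr => v _ do under eq_bigr => c _ do rewrite prodF.
under eq_bigr => v _ do rewrite -(bigA_distr_bigA (fun i t2 => F i (v i) t2)).
rewrite -(bigA_distr_bigA (fun i t1 => \sum_t2 F i t1 t2)) /=.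
rewrite (bigD1 j) //= [X in _ * X]big1 ?mulr1.
  by apply: eq_bigr => t1 _; apply: eq_bigr => t2 _; rewrite /F eqxx.
move=> i /negbTE ij; rewrite -[RHS](w1 i).
by apply: eq_bigr => t1 _; apply: eq_bigr => t2 _; rewrite /F ij mulr1.
Qed.

Section Bounds.
Variable R : realType.

Lemma round_sq_err_le (x : R) :
  round_up_prob x * ((Num.ceil x)%:~R - x) ^+ 2
  + (1 - round_up_prob x) * ((Num.floor x)%:~R - x) ^+ 2 <= 1 / 4.
Proof.
rewrite /round_up_prob.
have /andP[fl_le fl_gt] := floor_itv x.
have /andP[_ le_cl] := ceil_itv x.
have cl_le : (Num.ceil x)%:~R <= (Num.floor x + 1)%:~R :> R.
  by rewrite ler_int ceil_floor lerD2l; case: (x \isn't a Num.int).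
move: fl_gt cl_le; rewrite intrD.
set t := x - _; set u := (Num.ceil x)%:~R - x.
have -> : (Num.floor x)%:~R - x = - t by rewrite /t opprB.
move=> fl_gt cl_le.
have t_ge0 : 0 <= t by rewrite subr_ge0.
have u_le : u ^+ 2 <= (1 - t) ^+ 2.
  by rewrite ler_sqr ?nnegrE /u /t; lra.
have : t * u ^+ 2 <= t * (1 - t) ^+ 2 by apply: ler_wpM2l.
have variance_max :
    4 * (t * (1 - t) ^+ 2 + (1 - t) * t ^+ 2) = 1 - (2 * t - 1) ^+ 2 by ring.
by rewrite sqrrN; have := sqr_ge0 (2 * t - 1); lra.
Qed.

Lemma coord_sq_err_le (s x : R) : 0 <= s ->
  \sum_(v : bool) \sum_(c : bool) (bern s v * bern (round_up_prob x) c)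
     * (v%:R * theta_val c x - x) ^+ 2 <= (1 - s) * x ^+ 2 + s / 4.
Proof.
move=> s_ge0; rewrite !big_bool /= /theta_val /= !mul1r !mul0r !sub0r !sqrrN.
have := ler_wpM2l s_ge0 (round_sq_err_le x).
set p := round_up_prob x; set A := (_ - x) ^+ 2; set B := (_ - x) ^+ 2.
have -> : s * p * A + s * (1 - p) * B
          + ((1 - s) * p * x ^+ 2 + (1 - s) * (1 - p) * x ^+ 2)
          = s * (p * A + (1 - p) * B) + (1 - s) * x ^+ 2 by ring.
lra.
Qed.

Lemma expected_sq_err_le (d : nat) (sel x : 'I_d -> R) :
  (forall i, 0 <= sel i) ->
  expected_sq_err sel x <= \sum_i ((1 - sel i) * x i ^+ 2 + sel i / 4).
Proof.
move=> sel_ge0; rewrite /expected_sq_err /outcome_prob /sq_err.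
rewrite (@expect_separable_prod _ _ _ _
  (fun i v c => bern (sel i) v * bern (round_up_prob (x i)) c)
  (fun i v c => (v%:R * theta_val c (x i) - x i) ^+ 2)); last first.
  by move=> i; rewrite !big_bool /=; ring.
by apply: ler_sum => i _; apply: coord_sq_err_le.
Qed.

Lemma pl_ge0 (d : nat) (alpha : R) (l : nat) :
  0 <= pl d alpha l.
Proof. by rewrite divr_ge0 ?powR_ge0 ?sumr_ge0 // => i _; apply: powR_ge0. Qed.

Lemma pl_le1 (d : nat) (alpha : R) (l : 'I_d) :
  pl d alpha l <= 1.
Proof.
have rest_ge0 : 0 <= \sum_(i < d | i != l) i.+1%:R `^ alpha :> R.
  by apply: sumr_ge0 => i _; apply: powR_ge0.
rewrite /pl (bigD1 l) //= ler_pdivrMr ?mul1r ?lerDl //.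
by apply: ltr_wpDr rest_ge0 _; rewrite powR_gt0.
Qed.

Lemma ql_ge0 (d k : nat) (alpha : R) (l : 'I_d) :
  0 <= ql d k alpha l.
Proof.
by rewrite subr_ge0 exprn_ile1 // ?subr_ge0 ?pl_le1 // lerBlDr lerDl pl_ge0.
Qed.

Lemma ql_le1 (d k : nat) (alpha : R) (l : 'I_d) :
  ql d k alpha l <= 1.
Proof. by rewrite lerBlDr lerDl exprn_ge0 // subr_ge0 pl_le1. Qed.

Lemma rl_ge0 (d k N a : nat) (alpha : R) (l : 'I_d) :
  0 <= rl d k N a alpha l.
Proof.
apply: sumr_ge0 => j _.
have q_ge0 := ql_ge0 k alpha l; have q_le1 := ql_le1 k alpha l.
by rewrite mulr_ge0 ?mulr_ge0 ?ler0n ?exprn_ge0 // subr_ge0.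
Qed.

End Bounds.

Lemma sum_err_bound_power_law (R : realFieldType) (d : nat) (sigma : 'S_d)
    (c : R) (A r x s : 'I_d -> R) :
  c != 0 -> \sum_l A l ^+ 2 != 0 ->
  (forall l, x (sigma l) ^+ 2 = c ^+ 2 * A l ^+ 2) ->
  (forall l, s (sigma l) = r l) ->
  \sum_i ((1 - s i) * x i ^+ 2 + s i / 4)
  = (1 - (\sum_l r l * A l ^+ 2) / (\sum_l A l ^+ 2)
       + 1 / (4 * c ^+ 2) * ((\sum_l r l) / \sum_l A l ^+ 2))
    * \sum_i x i ^+ 2.
Proof.
move=> c_neq0 T_neq0 xE sE.
rewrite (reindex_inj (@perm_inj _ sigma)) /=.
rewrite [X in _ = _ * X](reindex_inj (@perm_inj _ sigma)) /=.
under eq_bigr => l _ do rewrite xE sE.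
under [X in _ = _ * X]eq_bigr => l _ do rewrite xE.
rewrite big_split /= -mulr_sumr -mulr_suml.
under eq_bigr => l _ do rewrite mulrBl mul1r [r l * _]mulrCA.
rewrite sumrB -!mulr_sumr.
by field; rewrite c_neq0 T_neq0.
Qed.

Theorem proposition1 (R : realType) (d N k a b : nat) (m phi alpha : R)
  (U : 'I_d -> R) (sigma : 'S_d) :
  (0 < d)%N -> (0 < N)%N -> (0 < k)%N -> (1 <= a <= N)%N -> (2 <= b)%N ->
  (N < 2 ^ b.-1)%N -> 0 < m -> 0 < phi -> alpha < 0 ->
  (* sigma l is the coordinate holding the (l+1)-th largest |entry| *)
  (forall l : 'I_d, `|U (sigma l)| = phi * (l.+1%:R `^ alpha)) ->
  let f : R := (2 ^+ b.-1 - N%:R) / (N%:R * m) in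
  let fU : 'I_d -> R := fun i => f * U i in
  let sel : 'I_d -> R := fun i => rl d k N a alpha (sigma^-1 i)%g in
  let gamma : R :=
    1 - (\sum_(l < d) rl d k N a alpha l * (l.+1%:R `^ (2 * alpha)))
          / (\sum_(l < d) (l.+1%:R `^ (2 * alpha)))
      + 1 / (4 * f ^+ 2) * ((\sum_(l < d) rl d k N a alpha l)
          / (phi ^+ 2 * \sum_(l < d) (l.+1%:R `^ (2 * alpha)))) in
  expected_sq_err sel fU <= gamma * sqnorm fU.
Proof.
move=> d_gt0 N_gt0 _ _ _ N_lt m_gt0 phi_gt0 _ U_pow; cbv zeta.
set f := (2 ^+ b.-1 - N%:R) / (N%:R * m); set fU := fun i => f * U i.
pose A (l : 'I_d) : R := l.+1%:R `^ alpha.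
have f_gt0 : 0 < f.
  by rewrite /f divr_gt0 ?mulr_gt0 ?ltr0n // subr_gt0 -natrX ltr_nat.
have A2E (l : 'I_d) : l.+1%:R `^ (2 * alpha) = A l ^+ 2.
  by rewrite mulrC powRrM powR_mulrn // powR_ge0.
have T_gt0 : 0 < \sum_l A l ^+ 2.
  rewrite (bigD1 (Ordinal d_gt0)) //=; apply: ltr_wpDr.
    by apply: sumr_ge0 => i _; apply: sqr_ge0.
  by rewrite exprn_gt0 // powR_gt0.
have fU2 l : fU (sigma l) ^+ 2 = (f * phi) ^+ 2 * A l ^+ 2.
  by rewrite /fU exprMn -[U _ ^+ 2]real_normK ?num_real // U_pow /A; ring.
have selE l : rl d k N a alpha (sigma^-1 (sigma l))%g = rl d k N a alpha l.
  by rewrite permK.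
have sel_ge0 i := rl_ge0 k N a alpha (sigma^-1 i)%g.
apply: le_trans (expected_sq_err_le fU sel_ge0) _.
have fphi_neq0 : f * phi != 0 by rewrite mulf_neq0 ?lt0r_neq0.
rewrite (sum_err_bound_power_law fphi_neq0 (lt0r_neq0 T_gt0) fU2 selE).
have T2E : \sum_(l < d) l.+1%:R `^ (2 * alpha) = \sum_l A l ^+ 2.
  by apply: eq_bigr => l _; rewrite A2E.
have S2E : \sum_(l < d) rl d k N a alpha l * l.+1%:R `^ (2 * alpha)
           = \sum_(l < d) rl d k N a alpha l * A l ^+ 2.
  by apply: eq_bigr => l _; rewrite A2E.
rewrite T2E S2E /sqnorm le_eqVlt; apply/predU1l; congr (_ * _).
by field; rewrite !lt0r_neq0.
Qed.
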